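(* Let $\tau$ be a signature, $\Gamma$ a set of second-order $\tau$-formulas closed under Boolean operations with $|\Gamma|=\kappa$ and a fixed enumeration $\Gamma=\{\gamma_i:i\in\kappa\}$. Then $\overline{C(\Gamma)}=\widetilde{C(\Gamma)}$, where $\overline{C(\Gamma)}$ is the topological closure of $C(\Gamma)$ in $2^\kappa$. Moreover, for every class $K$ of $\tau$-structures, $\overline{T_K}=T_{\overline K}$, where $\overline{T_K}$ is the closure of $T_K$ in $2^\kappa$.
   Context: $2^\kappa$ carries the product topology. For a $\tau$-structure $\mathcal A$, $\mathrm{Th}_\Gamma(\mathcal A)=\{\gamma\in\Gamma:\mathcal A\models\gamma\}$ (standard semantics). $C(\Gamma)=\{x\in2^\kappa:$ there is a $\tau$-structure $\mathcal A$ with $x(i)=1\iff\gamma_i\in\mathrm{Th}_\Gamma(\mathcal A)\}$, and $T_K$ is the same set with $\mathcal A$ ranging over $K$. Decomposable-Henkin models: given a family $\{\mathcal A_i:i\in I\}$ of $\tau$-structures and an ultrafilter $\mathcal F$ on $I$, with $\mathcal A=\prod_i\mathcal A_i/\mathcal F$, a relation $R\subseteq A^k$ ($k\ge1$) is decomposable if $R=\prod_i R_i/\mathcal F$ for some $R_i\subseteq A_i^k$; the decomposable-Henkin model formed from the family by $\mathcal F$ is $(\mathcal A,\Upsilon)$ with $\Upsilon$ the set of all decomposable relations. Henkin semantics $\models_\epsilon$: second-order quantifiers range only over relations in $\Upsilon$ of the appropriate arity, first-order parts are evaluated as usual, and $\models_\epsilon\gamma$ means truth under all assignments (with relation variables assigned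 values in $\Upsilon$). $\mathrm{Th}_\Gamma(\mathcal A,\Upsilon)=\{\gamma\in\Gamma:(\mathcal A,\Upsilon)\models_\epsilon\gamma\}$. $\widetilde{C(\Gamma)}=\{x\in2^\kappa:$ there is a decomposable-Henkin model $(\mathcal A,\Upsilon)$ with $x(i)=1\iff\gamma_i\in\mathrm{Th}_\Gamma(\mathcal A,\Upsilon)\}$. $\overline K$ is the class of all decomposable-Henkin models formed from some family $\{\mathcal A_i:i\in I\}$ by some ultrafilter $\mathcal F$ with $\{i\in I:\mathcal A_i\in K\}\in\mathcal F$; $T_{\overline K}$ is defined like $\widetilde{C(\Gamma)}$ with $(\mathcal A,\Upsilon)$ ranging over $\overline K$. *)

From HB Require Import structures.
From mathcomp Require Import all_boot.
From mathcomp Require Import boolp classical_sets filter topology.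
Set Implicit Arguments. Unset Strict Implicit. Unset Printing Implicit Defensive.
Local Open Scope classical_set_scope.

Record signature := Signature {
  fsym : Type; rsym : Type; farity : fsym -> nat; rarity : rsym -> nat }.

Section Syntax.
Variable tau : signature.

Inductive term : Type :=
  | TVar : nat -> term
  | TApp : forall f : fsym tau, ('I_(farity f) -> term) -> term.

(* Relation variables have arity k.+1 (>= 1) and
   are named by a pair (k, X).
   FSVar k X ts  : the atomic formula X(t_0, ..., t_k), X of arity k+1
   FEx n phi     : exists x_n, phi
   FExR k X phi  : exists X (of arity k+1), phi                        *)
Inductive formula : Type :=
  | FEq : term -> term -> formula
  | FRel : forall r : rsym tau, ('I_(rarity r) -> term) -> formula
  | FSVar : forall k : nat, nat -> ('I_k.+1 -> term) -> formula
  | FNeg : formula -> formula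
  | FAnd : formula -> formula -> formula
  | FEx : nat -> formula -> formula
  | FExR : nat -> nat -> formula -> formula.
End Syntax.

Record structure (tau : signature) := Structure {
  carrier :> Type;
  st_inh : inhabited carrier;
  st_fun : forall f : fsym tau, ('I_(farity f) -> carrier) -> carrier;
  st_rel : forall r : rsym tau, set ('I_(rarity r) -> carrier) }.

Section Semantics.
Variables (tau : signature) (A : structure tau).

Definition fo_assign := nat -> A.
Definition so_assign := forall k : nat, nat -> set ('I_k.+1 -> A).

Fixpoint eval_term (a : fo_assign) (t : term tau) : A :=
  match t with
  | TVar n => a n
  | TApp f ts => @st_fun _ A f (fun j => eval_term a (ts j))
  end.

Definition fo_upd (a : fo_assign) (n : nat) (c : A) : fo_assign :=
  fun m => if m == n then c else a m.

Definition so_upd (s : so_assign) (k X : nat) (R : set ('I_k.+1 -> A)) :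
    so_assign :=
  fun k' X' => match k =P k' with
    | ReflectT e => if X' == X then eq_rect k (fun m => set ('I_m.+1 -> A)) R k' e
                    else s k' X'
    | ReflectF _ => s k' X'
    end.

(* satisfaction where second-order quantifiers of arity k+1 range over U k *)
Fixpoint sat_gen (U : forall k : nat, set (set ('I_k.+1 -> A)))
    (a : fo_assign) (s : so_assign) (phi : formula tau) : Prop :=
  match phi with
  | FEq t1 t2 => eval_term a t1 = eval_term a t2
  | FRel r ts => @st_rel _ A r (fun j => eval_term a (ts j))
  | FSVar k X ts => s k X (fun j => eval_term a (ts j))
  | FNeg p => ~ sat_gen U a s p
  | FAnd p q => sat_gen U a s p /\ sat_gen U a s q
  | FEx n p => exists c : A, sat_gen U (fo_upd a n c) s p
  | FExR k X p => exists R, U k R /\ sat_gen U a (@so_upd s k X R) p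
  end.

Definition models (phi : formula tau) : Prop :=
  forall (a : fo_assign) (s : so_assign), sat_gen (fun _ => setT) a s phi.

Definition models_henkin (Ups : forall k : nat, set (set ('I_k.+1 -> A)))
    (phi : formula tau) : Prop :=
  forall (a : fo_assign) (s : so_assign),
    (forall k X, Ups k (s k X)) -> sat_gen Ups a s phi.
End Semantics.

Section Ultraproduct.
Variables (tau : signature) (J : Type) (Af : J -> structure tau)
          (F : set (set J)).

Definition uequiv (x y : forall j, Af j) : Prop := F [set j | x j = y j].
Definition uclass (x : forall j, Af j) : set (forall j, Af j) := [set y | uequiv x y].

Definition ucarrier : Type := {S : set (forall j, Af j) | exists x, S = uclass x}.

Definition uproj (x : forall j, Af j) : ucarrier :=
  exist _ (uclass x) (ex_intro _ x erefl).

Definition urep (c : ucarrier) : forall j, Af j := projT1 (cid (proj2_sig c)).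

Definition ufun (f : fsym tau) (args : 'I_(farity f) -> ucarrier) : ucarrier :=
  uproj (fun j => @st_fun _ (Af j) f (fun i => urep (args i) j)).

Definition urel (r : rsym tau) : set ('I_(rarity r) -> ucarrier) :=
  [set args | F [set j | @st_rel _ (Af j) r (fun i => urep (args i) j)]].

Lemma uinh : inhabited ucarrier.
Proof.
have h : forall j, exists x : Af j, True.
  by move=> j; case: (@st_inh _ (Af j)) => x; exists x.
by constructor; exact: (uproj (fun j => projT1 (cid (h j)))).
Qed.

Definition ultraproduct : structure tau := @Structure tau ucarrier uinh ufun urel.

Definition decomposable (k : nat) (R : set ('I_k.+1 -> ultraproduct)) : Prop :=
  exists Rs : forall j, set ('I_k.+1 -> Af j),
    R = [set c | F [set j | Rs j (fun i => urep (c i) j)]].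

Definition decomp_rels : forall k : nat, set (set ('I_k.+1 -> ultraproduct)) :=
  fun k => [set R | @decomposable k R].
End Ultraproduct.

Definition cantor_cube (I : Type) := {ptws I -> bool}.

Section Spaces.
Variables (tau : signature) (I : Type) (gamma : I -> formula tau).

Definition T_K (K : structure tau -> Prop) : set (cantor_cube I) :=
  [set x | exists A : structure tau, K A /\
             forall i, x i = true <-> models A (gamma i)].

Definition C_Gamma : set (cantor_cube I) :=
  [set x | exists A : structure tau,
             forall i, x i = true <-> models A (gamma i)].

Definition C_tilde : set (cantor_cube I) :=
  [set x | exists (J : Type) (Af : J -> structure tau) (F : set (set J)),
     UltraFilter F /\
     forall i, x i = true <->
       models_henkin (@decomp_rels tau J Af F) (gamma i)].

Definition T_Kbar (K : structure tau -> Prop) : set (cantor_cube I) :=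
  [set x | exists (J : Type) (Af : J -> structure tau) (F : set (set J)),
     UltraFilter F /\ F [set j | K (Af j)] /\
     forall i, x i = true <->
       models_henkin (@decomp_rels tau J Af F) (gamma i)].
End Spaces.

(* Gamma = range gamma is closed under Boolean operations (negation and
   conjunction, the primitive connectives of the syntax) *)
Definition boolean_closed (tau : signature) (I : Type) (gamma : I -> formula tau) :=
  (forall i, exists j, gamma j = FNeg (gamma i)) /\
  (forall i i', exists j, gamma j = FAnd (gamma i) (gamma i')).

From mathcomp Require Import all_boot.
From mathcomp Require Import boolp classical_sets filter topology.
Set Implicit Arguments.
Unset Strict Implicit.
Unset Printing Implicit Defensive.
Local Open Scope classical_set_scope.

(* Los's theorem holds for decomposable-Henkin models: second-order witnesses
   chosen coordinatewise in the factors glue to a decomposable relation, so the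
   Henkin theory of prod_j A_j / F is the F-limit of the theories of the A_j.
   Hence T_Kbar is the set of ultrafilter limits of theories of members of K.
   In any space, the closure of a set is the set of ultrafilter limits of its
   points (extend a proper filter converging to x and containing the set to an
   ultrafilter, indexed by the points themselves), so closure T_K = T_Kbar;
   C(Gamma) and its Henkin counterpart are the case where K is everything. *)

Lemma dependent_epsilon (J : Type) (G : J -> Type) (P : forall j, G j -> Prop) :
  (forall j, inhabited (G j)) ->
  exists f : forall j, G j, forall j, (exists x, P j x) -> P j (f j).
Proof.
move=> inh.
have eps j : exists x : G j, (exists y, P j y) -> P j x.
  have [[y Py]|noP] := pselect (exists y, P j y); first by exists y.
  by case: (inh j) => x; exists x.
by exists (fun j => projT1 (cid (eps j))) => j; exact: projT2 (cid (eps j)).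
Qed.

Lemma filter_equiv (T : Type) (F : set_system T) (D P Q : set T) : Filter F ->
  F D -> (forall t, D t -> (P t <-> Q t)) -> (F P <-> F Q).
Proof.
move=> FF FD PQ; split; apply: filterS2 FD => t /PQ; tauto.
Qed.

Section UltraFilterFacts.
Variables (J : Type) (U : set_system J).
Hypothesis UU : UltraFilter U.

Lemma ultra_setC (P : set J) : U (~` P) <-> ~ U P.
Proof.
split; first by move=> UnP UP; have [j []] := filter_ex (filterI UnP UP).
by move=> nUP; have [/nUP|] := in_ultra_setVsetC P UU.
Qed.

Lemma ultra_asboolE (P : set J) (b : bool) :
  U [set j | `[< P j >] = b] <-> (b <-> U P).
Proof.
case: b.
  have -> : [set j | `[< P j >] = true] = P by apply/seteqP; split=> j /asboolP.
  by split=> [UP | UP]; [split | exact: UP.1].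
have -> : [set j | `[< P j >] = false] = ~` P.
  by apply/seteqP; split=> j; [move/negbT/asboolPn | move/asboolPn/negbTE].
rewrite ultra_setC; split=> [nUP | [_ UPF] UP]; first by split=> // /nUP.
by have := UPF UP.
Qed.

End UltraFilterFacts.

(* [K] is a predicate rather than a [set S]: [set (structure tau)] is
   ill-typed, since structures live above the universe of [set]. *)
Lemma closure_image_ultraE (X : topologicalType) (S : Type) (f : S -> X)
    (K : S -> Prop) :
  closure [set x | exists2 s, K s & f s = x] =
  [set x | exists (J : Type) (g : J -> S) (U : set_system J),
    UltraFilter U /\ U [set j | K (g j)] /\ (f \o g) @ U --> x].
Proof.
apply/seteqP; split=> x; last first.
  case=> J [g [U [UU [UK fgUx]]]]; rewrite closureEcvg.
  exists ((f \o g) @ U); first exact: fmap_proper_filter.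
  split=> // B KB; suff : U [set j | B (f (g j))] by [].
  by apply: filterS UK => j Kgj; apply: KB; exists (g j).
set fK := [set x | exists2 s, K s & f s = x].
rewrite closureEcvg => -[G PG [Gx KG]].
have GfK : G fK by exact: KG.
have [U [UU sGU]] := ultraFilterLemma PG.
have [_ [s0 Ks0 _]] := filter_ex GfK.
have /choice[g gP] : forall y, exists s, fK y -> K s /\ f s = y.
  move=> y; have [[s Ks <-]|nfKy] := pselect (fK y); first by exists s.
  by exists s0 => /nfKy.
have UfK : U fK by exact: sGU.
exists X, g, U; split=> //; split.
  by apply: filterS UfK => y /gP[].
move=> B /Gx /sGU UB; suff : U [set j | B (f (g j))] by [].
by apply: filterS2 UB UfK => y By /gP[_] /= ->.
Qed.

Lemma initial_cvgP (S : choiceType) (T : topologicalType) (f : S -> T)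
    (F : set_system S) (s : S) :
  Filter F -> F --> (s : initial_topology f) <-> f @ F --> f s.
Proof.
move=> FF; split=> [Fs | fFs B].
  exact: cvg_trans (cvg_app f Fs) (@initial_continuous S T f s).
rewrite nbhsE => -[_ [[A oA <-] As] sB]; apply: filterS sB _.
by apply: fFs; apply: open_nbhs_nbhs.
Qed.

Lemma prod_topology_cvgP (I : Type) (T : I -> topologicalType)
    (F : set_system (prod_topology T)) (x : prod_topology T) :
  Filter F -> F --> x <-> forall i, (fun y => y i) @ F --> x i.
Proof.
move=> FF; rewrite (@cvg_sup _ _ _ F x FF); split=> Fx i.
  by apply/initial_cvgP/Fx.
exact/initial_cvgP.
Qed.

Lemma bool_cvgP (F : set_system bool) (b : bool) :
  Filter F -> F --> b <-> F [set b].
Proof.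
move=> FF; split=> [Fb | Fb B /nbhs_singleton Bb].
  exact/Fb/principal_filterP.
by apply: filterS Fb => _ ->.
Qed.

Lemma cube_cvgP (I : Type) (G : set_system (cantor_cube I))
    (x : cantor_cube I) :
  Filter G -> G --> x <-> forall i, G [set y | y i = x i].
Proof.
move=> FG; rewrite prod_topology_cvgP.
by split=> Gx i; [move/bool_cvgP: (Gx i) | apply/bool_cvgP; exact: Gx].
Qed.

Section Los.
Variables (tau : signature) (J : Type) (Af : J -> structure tau).
Variable F : set_system J.
Hypothesis FU : UltraFilter F.
Local Notation UP := (ultraproduct Af F).

Lemma uproj_urep (c : UP) : uproj F (urep c) = c.
Proof.
case: c => S hS; rewrite /urep /=; case: (cid hS) => x /= e.
exact: eq_exist (esym e).
Qed.

Lemma uproj_eqP (x y : forall j, Af j) :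
  uproj F x = uproj F y <-> F [set j | x j = y j].
Proof.
split=> [/(congr1 sval) /= exy | Fxy].
  have : uclass F y y by apply: filterE => j.
  by rewrite -exy.
apply: eq_exist; apply/seteqP; split=> z; rewrite /uclass /uequiv /= => Fz.
  by apply: filterS2 Fxy Fz => j /= <-.
by apply: filterS2 Fxy Fz => j /= ->.
Qed.

Lemma urep_uproj (x : forall j, Af j) : F [set j | urep (uproj F x) j = x j].
Proof. by apply/uproj_eqP; rewrite uproj_urep. Qed.

Lemma ueqP (c d : UP) : c = d <-> F [set j | urep c j = urep d j].
Proof. by rewrite -uproj_eqP !uproj_urep. Qed.

Definition uprod_rel n (Rs : forall j, set ('I_n -> Af j)) : set ('I_n -> UP) :=
  [set c | F [set j | Rs j (fun i => urep (c i) j)]].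

Definition fo_decomp (a : fo_assign UP) (aj : forall j, fo_assign (Af j)) :=
  forall n, F [set j | urep (a n) j = aj j n].

Definition so_decomp (s : so_assign UP) (sj : forall j, so_assign (Af j)) :=
  forall k X, s k X = uprod_rel (fun j => sj j k X).

Lemma eval_decomp a aj : fo_decomp a aj ->
  forall t, F [set j | urep (eval_term a t) j = eval_term (aj j) t].
Proof.
move=> aE; elim=> [n | f ts IHts] //=.
have := urep_uproj
  (fun j => @st_fun _ (Af j) f (fun i => urep (eval_term a (ts i)) j)).
apply: filterS2 (filter_forall _ IHts) => j /= tsE ->.
by congr st_fun; apply/funext => i; rewrite tsE.
Qed.

Lemma uprod_rel_eval a aj n (Rs : forall j, set ('I_n -> Af j))
    (ts : 'I_n -> term tau) :
  fo_decomp a aj ->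
  uprod_rel Rs (fun i => eval_term a (ts i)) <->
  F [set j | Rs j (fun i => eval_term (aj j) (ts i))].
Proof.
move=> aE.
apply: filter_equiv (filter_forall _ (fun i => eval_decomp aE (ts i))) _.
by move=> j /= tsE; rewrite (funext tsE).
Qed.

Lemma fo_decomp_upd a aj n c (cj : forall j, Af j) :
  fo_decomp a aj -> F [set j | urep c j = cj j] ->
  fo_decomp (fo_upd a n c) (fun j => fo_upd (aj j) n (cj j)).
Proof. by move=> aE cE m; rewrite /fo_upd; case: (m == n). Qed.

Lemma so_decomp_upd s sj k X (Rs : forall j, set ('I_k.+1 -> Af j)) :
  so_decomp s sj ->
  so_decomp (so_upd s X (uprod_rel Rs)) (fun j => so_upd (sj j) X (Rs j)).
Proof.
move=> sE k' X'; rewrite /so_upd; case: (k =P k') => [e|_] //; subst k' => /=.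
by case: (X' == X).
Qed.

Local Notation sat_full A := (@sat_gen tau A (fun _ => setT)).

Lemma sat_decomp (phi : formula tau) a aj s sj :
  fo_decomp a aj -> so_decomp s sj ->
  sat_gen (@decomp_rels tau J Af F) a s phi <->
  F [set j | sat_full (Af j) (aj j) (sj j) phi].
Proof.
elim: phi a aj s sj => [t1 t2|r ts|k X ts|p IHp|p IHp q IHq|n p IHp|k X p IHp]
  a aj s sj aE sE /=.
- rewrite ueqP.
  apply: filter_equiv (filterI (eval_decomp aE t1) (eval_decomp aE t2)) _.
  by move=> j [/= <- <-].
- exact: uprod_rel_eval (fun j => @st_rel _ (Af j) r) ts aE.
- by rewrite sE; exact: uprod_rel_eval.
- by rewrite (IHp _ _ _ _ aE sE) -ultra_setC.
- by rewrite (IHp _ _ _ _ aE sE) (IHq _ _ _ _ aE sE) -near_andP.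
- split=> [[c] | Fex].
    have cE : F [set j | urep c j = urep c j] by apply: filterE.
    move/(IHp _ _ _ _ (fo_decomp_upd n aE cE) sE).
    by apply: filterS => j satj; exists (urep c j).
  have [cj cjP] := dependent_epsilon
    (fun j x => sat_full (Af j) (fo_upd (aj j) n x) (sj j) p)
    (fun j => st_inh (Af j)).
  exists (uproj F cj).
  apply/(IHp _ _ _ _ (fo_decomp_upd n aE (urep_uproj cj)) sE).
  by apply: filterS Fex => j /cjP.
- split=> [[_ [[Rs ->]]] | Fex].
    move/(IHp _ _ _ _ aE (so_decomp_upd X Rs sE)).
    by apply: filterS => j satj; exists (Rs j).
  have [Rs RsP] := @dependent_epsilon _ (fun j => set ('I_k.+1 -> Af j))
    (fun j R => setT R /\ sat_full (Af j) (aj j) (so_upd (sj j) X R) p)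
    (fun j => inhabits set0).
  exists (uprod_rel Rs); split; first by exists Rs.
  apply/(IHp _ _ _ _ aE (so_decomp_upd X Rs sE)).
  by apply: filterS Fex => j /RsP[].
Qed.

Lemma models_henkin_decompE (phi : formula tau) :
  models_henkin (@decomp_rels tau J Af F) phi <-> F [set j | models (Af j) phi].
Proof.
split=> [henk | Fmod a s sD].
  (* Glue counter-assignments of the failing factors into a decomposable one. *)
  apply: contrapT => /(ultra_setC FU) Fnot.
  have [ctr ctrP] := @dependent_epsilon J
    (fun j => (fo_assign (Af j) * so_assign (Af j))%type)
    (fun j c => ~ sat_full (Af j) c.1 c.2 phi)
    (fun j => let: inhabits x := st_inh (Af j) in
              inhabits (fun=> x, fun _ _ => set0)).
  pose a : fo_assign UP := fun n => uproj F (fun j => (ctr j).1 n).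
  pose s : so_assign UP := fun k X => uprod_rel (fun j => (ctr j).2 k X).
  have aE : fo_decomp a (fun j => (ctr j).1) by move=> n; exact: urep_uproj.
  have sE : so_decomp s (fun j => (ctr j).2) by [].
  have /(sat_decomp phi aE sE) Fsat := henk a s (fun k X => ex_intro _ _ erefl).
  have [j [satj notmodj]] := filter_ex (filterI Fsat Fnot).
  apply: (ctrP j) satj; apply: contra_notP notmodj => noctr b t.
  by apply: contrapT => nsat; apply: noctr; exists (b, t).
pose sj j k X := projT1 (cid (sD k X)) j.
have sE : so_decomp s sj by move=> k X; exact: projT2 (cid (sD k X)).
have aE : fo_decomp a (fun j n => urep (a n) j) by move=> n; apply: filterE.
by apply/(sat_decomp phi aE sE); apply: filterS Fmod => j; apply.
Qed.

End Los.

Section Theories.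
Variables (tau : signature) (I : Type) (gamma : I -> formula tau).

Definition theory (A : structure tau) : cantor_cube I :=
  fun i => `[< models A (gamma i) >].

Lemma theoryP (x : cantor_cube I) (A : structure tau) :
  (forall i, x i = true <-> models A (gamma i)) <-> x = theory A.
Proof.
split=> [xA | -> i]; last by split=> /asboolP.
by apply/funext => i; rewrite /theory -(propext (xA i)) asboolb.
Qed.

Lemma T_K_theoryE (K : structure tau -> Prop) :
  T_K gamma K = [set x | exists2 A, K A & theory A = x].
Proof.
apply/seteqP; split=> x; first by case=> A [KA /theoryP ->]; exists A.
by case=> A KA <-; exists A; split=> //; apply/theoryP.
Qed.

Lemma decomp_henkin_cvgP (J : Type) (Af : J -> structure tau) (U : set_system J)
    (x : cantor_cube I) : UltraFilter U ->
  (forall i,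
     x i = true <-> models_henkin (@decomp_rels tau J Af U) (gamma i)) <->
  (theory \o Af) @ U --> x.
Proof.
move=> UU; rewrite cube_cvgP; split=> xU i.
  by apply/(ultra_asboolE UU); rewrite -models_henkin_decompE; exact: xU.
by rewrite models_henkin_decompE; apply/(ultra_asboolE UU)/xU.
Qed.

Lemma T_Kbar_ultralimitE (K : structure tau -> Prop) :
  T_Kbar gamma K =
  [set x | exists (J : Type) (Af : J -> structure tau) (U : set_system J),
    UltraFilter U /\ U [set j | K (Af j)] /\ (theory \o Af) @ U --> x].
Proof.
apply/seteqP; split=> x [J [Af [U [UU [UK xU]]]]]; exists J, Af, U;
  by split=> //; split=> //; apply/decomp_henkin_cvgP.
Qed.

Lemma closure_T_K (K : structure tau -> Prop) :
  closure (T_K gamma K) = T_Kbar gamma K.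
Proof. by rewrite T_K_theoryE closure_image_ultraE T_Kbar_ultralimitE. Qed.

Lemma C_Gamma_T_K : C_Gamma gamma = T_K gamma (fun _ => True).
Proof. by apply/seteqP; split=> x [A xA]; exists A => //; case: xA. Qed.

Lemma C_tilde_T_Kbar : C_tilde gamma = T_Kbar gamma (fun _ => True).
Proof.
apply/seteqP; split=> x [J [Af [U [UU xU]]]]; exists J, Af, U => //.
  by split=> //; split=> //; apply: filterE.
by case: xU.
Qed.

End Theories.

Theorem lemma2p23 (tau : signature) (I : Type) (gamma : I -> formula tau) :
  injective gamma -> boolean_closed gamma ->
  closure (C_Gamma gamma) = C_tilde gamma /\
  (forall K : structure tau -> Prop, closure (T_K gamma K) = T_Kbar gamma K).
Proof.
move=> _ _; split; last exact: closure_T_K.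
by rewrite C_Gamma_T_K C_tilde_T_Kbar closure_T_K.
Qed.
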